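(* There is an absolute constant $C<\infty$ such that for every $n\ge1$, $\|M_{\mathrm{Sen}(\mathcal S)}\|_{2\to2}\le C\,\|M_{\mathrm{Sen}(\mathcal N)}\|_{2\to2}$.
   Context: Let $\mathbb{I}^n=\{0,1\}^n$ with Hamming distance $d$, and $V=\mathbb{R}^{\mathbb{I}^n}$ with $\|f\|_2=(\sum_x f(x)^2)^{1/2}$. For $0\le k\le n$, $(S_kf)(x)=\binom{n}{k}^{-1}\sum_{y:\,d(x,y)=k}f(y)$. For a family $\mathcal A$ of linear operators on $V$, $(M_{\mathcal A}f)(x)=\sup_{A\in\mathcal A}(Af)(x)$. $\mathcal S=\{S_k\}_{k=0}^n$ and $\mathrm{Sen}(\mathcal S)_k=\frac{1}{k+1}\sum_{\ell=0}^kS_\ell$ for $0\le k\le n$. For real $t\ge0$, with $p=(1-e^{-t})/2$, the noise operator is $N_t=\sum_{k=0}^n\binom nk p^k(1-p)^{n-k}S_k$, and $\mathrm{Sen}(\mathcal N)=\{\mathrm{Sen}(\mathcal N)_T\}_{T\ge0}$ with $\mathrm{Sen}(\mathcal N)_T=\frac1T\int_0^TN_t\,dt$ for $T>0$ and $\mathrm{Sen}(\mathcal N)_0=N_0=$ identity (the limit as $T\downarrow0$). For a sublinear operator $M$, $\|M\|_{2\to2}=\sup_{f\ne0}\|Mf\|_2/\|f\|_2$. *)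

From HB Require Import structures.
From mathcomp Require Import all_boot all_order all_algebra.
From mathcomp Require Import all_classical all_reals all_analysis.
Set Implicit Arguments. Unset Strict Implicit. Unset Printing Implicit Defensive.
Import Order.TTheory GRing.Theory Num.Theory.
Import numFieldNormedType.Exports.
Local Open Scope classical_set_scope.
Local Open Scope ring_scope.

Definition cube (n : nat) := {ffun 'I_n -> bool}.

Definition hamming (n : nat) (x y : cube n) : nat := #|[set i | x i != y i]|.

Section Ops.
Variable R : realType.
Variable n : nat.

Definition fn := cube n -> R.

Definition Sph (k : nat) (f : fn) : fn := fun x =>
  ('C(n, k)%:R)^-1 * \sum_(y : cube n | hamming x y == k) f y.

Definition SenS (k : nat) (f : fn) : fn := fun x =>
  (k.+1%:R)^-1 * \sum_(l < k.+1) Sph l f x.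

Definition noise_p (t : R) : R := (1 - expR (- t)) / 2.
Definition Noise (t : R) (f : fn) : fn := fun x =>
  \sum_(k < n.+1) 'C(n, k)%:R * noise_p t ^+ k * (1 - noise_p t) ^+ (n - k)
     * Sph k f x.

Definition SenN (T : R) (f : fn) : fn := fun x =>
  if T == 0 then f x
  else T^-1 * (\int[lebesgue_measure]_(t in `[0, T]) Noise t f x).

Definition maxop (I : Type) (D : set I) (A : I -> fn -> fn) (f : fn) : fn :=
  fun x => sup [set A i f x | i in D].

Definition l2norm (f : fn) : R := Num.sqrt (\sum_(x : cube n) f x ^+ 2).

Definition opnorm (M : fn -> fn) : R :=
  sup [set l2norm (M f) / l2norm f | f in [set f : fn | exists x, f x != 0]].

Definition MSenS : fn -> fn := maxop [set k : nat | (k <= n)%N] SenS.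
Definition MSenN : fn -> fn := maxop [set T : R | 0 <= T] SenN.

End Ops.

From HB Require Import structures.
From mathcomp Require Import all_boot all_order all_algebra.
From mathcomp Require Import all_classical all_reals all_analysis.
From mathcomp Require Import ring lra zify.
Set Implicit Arguments. Unset Strict Implicit. Unset Printing Implicit Defensive.
Import Order.TTheory GRing.Theory Num.Theory.
Import numFieldNormedType.Exports.
Local Open Scope classical_set_scope.
Local Open Scope ring_scope.

(* Every [Sen(N)_T] averages the spheres with nonnegative weights:
   [Sen(N)_T f = T^-1 \sum_k (\int_0^T w_k) S_k f], where [w_k(t)] is the
   binomial [(n, p(t))] probability of [k].  Let [g >= 0].  For [k <= n/8]
   and [T = 8(k+1)/(n+1)], a second moment estimate for the binomial law
   gives [\int_0^T w_j >= 1/(4(n+1))] for all [j <= k], hence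
   [Sen(S)_k g <= 32 Sen(N)_T g].  For larger [k],
   [Sen(S)_k g(x) <= 8/(n+1) \sum_j S_j g(x)]; the spheres of radius above
   [n/2] around [x] are the spheres of radius below [n/2] around the antipode
   of [x], and an exponentially weighted average of [Sen(N)_i g] over
   [i = 1, 2, ...] gives each sphere of radius below [n/2] a weight of order
   [1/n].  So [M_{Sen(S)} f(x) <= 64 (M_{Sen(N)}|f|(x) + M_{Sen(N)}|f|(-x))],
   and the antipodal map preserves the [L^2] norm. *)

Section BinomialDistribution.
Variable R : realFieldType.
Implicit Types (p : R) (m i j : nat).

Definition binom_pmf m i p : R := 'C(m, i)%:R * p ^+ i * (1 - p) ^+ (m - i).

Definition binom_cdf m j p : R := \sum_(i < j.+1) binom_pmf m i p.

Lemma binom_pmf_ge0 m i p : 0 <= p -> p <= 1 -> 0 <= binom_pmf m i p.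
Proof.
move=> p0 p1; apply: mulr_ge0; last by rewrite exprn_ge0 // subr_ge0.
by rewrite mulr_ge0 ?exprn_ge0.
Qed.

Lemma sum_binom_pmf m p : \sum_(i < m.+1) binom_pmf m i p = 1.
Proof.
have := exprDn (1 - p) p m; rewrite subrK expr1n => ->.
by apply: eq_bigr => i _; rewrite /binom_pmf -mulr_natl; ring.
Qed.

Lemma binom_pmf_le1 m i p : 0 <= p -> p <= 1 -> binom_pmf m i p <= 1.
Proof.
move=> p0 p1; have [im|mi] := leqP i m; last by rewrite /binom_pmf bin_small ?mul0r.
rewrite -(sum_binom_pmf m p) (bigD1 (Ordinal (im : (i < m.+1)%N))) //= lerDl.
by apply: sumr_ge0 => k _; exact: binom_pmf_ge0.
Qed.

Lemma binom_pmf_half m i : (i <= m)%N ->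
  binom_pmf m i (1 / 2) = 'C(m, i)%:R * (1 / 2) ^+ m.
Proof.
move=> im; rewrite /binom_pmf -mulrA (_ : 1 - 1 / 2 = 1 / 2 :> R); last by field.
by rewrite -exprD subnKC.
Qed.

Lemma binom_cdf0 m j : binom_cdf m j 0 = 1.
Proof.
rewrite /binom_cdf big_ord_recl /binom_pmf bin0 expr0 subr0 expr1n !mul1r.
by rewrite big1 ?addr0 // => i _; rewrite expr0n /= mulr0 mul0r.
Qed.

Lemma binom_cdfE m j p : (j <= m)%N ->
  binom_cdf m j p = \sum_(i < m.+1 | (i <= j)%N) binom_pmf m i p.
Proof. by move=> jm; rewrite /binom_cdf (big_ord_widen m.+1 (binom_pmf m ^~ p)). Qed.

Lemma binom_tailE m j p : (j <= m)%N ->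
  1 - binom_cdf m j p = \sum_(i < m.+1 | (j < i)%N) binom_pmf m i p.
Proof.
move=> jm; rewrite binom_cdfE // -(sum_binom_pmf m p) (bigID (fun i : 'I_m.+1 => (i <= j)%N)).
by rewrite addrAC subrr add0r; apply: eq_bigl => i; rewrite ltnNge.
Qed.

Lemma binom_pmfSS m i p :
  i.+1%:R * binom_pmf m.+1 i.+1 p = m.+1%:R * p * binom_pmf m i p.
Proof.
rewrite /binom_pmf subSS exprS !mulrA -natrM -mul_bin_diag natrM; ring.
Qed.

Lemma binom_mean m p : \sum_(i < m.+1) i%:R * binom_pmf m i p = m%:R * p.
Proof.
case: m => [|m]; first by rewrite big_ord1 !mul0r.
rewrite big_ord_recl mul0r add0r -[RHS]mulr1 -[X in _ * X](sum_binom_pmf m p) mulr_sumr.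
by apply: eq_bigr => i _; rewrite /= /bump /= add1n binom_pmfSS.
Qed.

Lemma binom_second_moment m p :
  \sum_(i < m.+1) i%:R ^+ 2 * binom_pmf m i p = m%:R * p * (m.-1%:R * p + 1).
Proof.
case: m => [|m]; first by rewrite big_ord1 expr0n !mul0r.
rewrite big_ord_recl expr0n mul0r add0r /=.
have -> : m%:R * p + 1 = \sum_(i < m.+1) i.+1%:R * binom_pmf m i p.
  rewrite -binom_mean -[X in _ + X](sum_binom_pmf m p) -big_split.
  by apply: eq_bigr => i _; rewrite -natr1 mulrDl mul1r.
rewrite mulr_sumr; apply: eq_bigr => i _; rewrite /= /bump /= add1n.
by rewrite expr2 -mulrA binom_pmfSS; ring.
Qed.

Lemma le_sqr_div4_add (x c : R) : 0 < c -> x <= x ^+ 2 / (4 * c) + c.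
Proof.
move=> c0; rewrite -subr_ge0.
have -> : x ^+ 2 / (4 * c) + c - x = (x - 2 * c) ^+ 2 / (4 * c) by field; rewrite gt_eqF.
by rewrite divr_ge0 ?sqr_ge0 //; lra.
Qed.

(* A second-moment (Paley-Zygmund type) bound: the mass below [j] carries at
   most half of the mean, and AM-GM against [1 + mean] bounds the rest by the
   second moment and the tail. *)
Lemma binom_tail_ge m j p : 0 <= p -> p <= 1 -> (j <= m)%N ->
  1 <= m%:R * p -> 2 * j%:R <= m%:R * p -> 1 / 8 <= 1 - binom_cdf m j p.
Proof.
move=> p0 p1 jm mu1 jmu; set mu := m%:R * p in mu1 jmu *.
set tail := 1 - binom_cdf m j p.
have tail0 : 0 <= tail by rewrite /tail binom_tailE //; apply: sumr_ge0 => i _; exact: binom_pmf_ge0.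
have c0 : 0 < 1 + mu by lra.
have := binom_mean m p; rewrite (bigID (fun i : 'I_m.+1 => (i <= j)%N)) /= -/mu => hmu.
have low : \sum_(i < m.+1 | (i <= j)%N) i%:R * binom_pmf m i p <= j%:R.
  apply: (@le_trans _ _ (\sum_(i < m.+1 | (i <= j)%N) j%:R * binom_pmf m i p)).
    by apply: ler_sum => i ij; rewrite ler_wpM2r ?ler_nat ?binom_pmf_ge0.
  rewrite -mulr_sumr -binom_cdfE // ler_piMr ?ler0n //.
  by move: tail0; rewrite /tail subr_ge0.
have high : \sum_(i < m.+1 | ~~ (i <= j)%N) i%:R * binom_pmf m i p <= mu / 4 + (1 + mu) * tail.
  apply: (@le_trans _ _ (\sum_(i < m.+1 | (j < i)%N)
      (i%:R ^+ 2 / (4 * (1 + mu)) * binom_pmf m i p + (1 + mu) * binom_pmf m i p))).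
    rewrite (eq_bigl (fun i : 'I_m.+1 => (j < i)%N)); last by move=> i; rewrite ltnNge.
    apply: ler_sum => i _; rewrite -mulrDl ler_wpM2r ?binom_pmf_ge0 //.
    exact: le_sqr_div4_add.
  rewrite big_split /= -mulr_sumr -binom_tailE // lerD2r.
  apply: (@le_trans _ _ (\sum_(i < m.+1) i%:R ^+ 2 / (4 * (1 + mu)) * binom_pmf m i p)).
    rewrite [X in _ <= X](bigID (fun i : 'I_m.+1 => (j < i)%N)) /= lerDl.
    by apply: sumr_ge0 => i _; rewrite mulr_ge0 ?binom_pmf_ge0 ?divr_ge0 ?sqr_ge0 //; lra.
  under eq_bigr do rewrite mulrAC.
  rewrite -mulr_suml binom_second_moment -/mu ler_pdivrMr; last lra.
  have : m.-1%:R * p <= mu by rewrite ler_wpM2r // ler_nat leq_pred.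
  nra.
nra.
Qed.

(* By the symmetry [i <-> m - i] of [binom_pmf m i (1/2)]. *)
Lemma binom_cdf_half m j : (2 * j < m)%N -> binom_cdf m j (1 / 2) <= 1 / 2.
Proof.
move=> jm; suff : binom_cdf m j (1 / 2) <= 1 - binom_cdf m j (1 / 2) by lra.
rewrite binom_tailE ?binom_cdfE; try lia.
rewrite (reindex_inj rev_ord_inj) /= big_mkcond [X in _ <= X]big_mkcond /=.
apply: ler_sum => i _; have im : (i <= m)%N by rewrite -ltnS.
rewrite subSS; case: ifP => [ij|_].
  rewrite ifT; last lia.
  by rewrite !binom_pmf_half ?leq_subr // bin_sub.
by case: ifP => _ //; apply: binom_pmf_ge0; lra.
Qed.

End BinomialDistribution.

Section NoiseWeights.
Variable R : realType.

Lemma derivable_continuous (f : R -> R) : (forall x, derivable f x 1) -> continuous f.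
Proof. by move=> df x; apply/differentiable_continuous/derivable1_diffP/df. Qed.

Definition dbinom_pmf m i (p : R) : R := 'C(m, i)%:R *
  (i%:R * p ^+ i.-1 * (1 - p) ^+ (m - i) - p ^+ i * ((m - i)%:R * (1 - p) ^+ (m - i).-1)).

Lemma is_derive_binom_pmf m i (p : R) : is_derive p 1 (binom_pmf m i) (dbinom_pmf m i p).
Proof.
have -> : binom_pmf m i = 'C(m, i)%:R \*: (@id R ^+ i) * (cst 1 - @id R) ^+ (m - i).
  by apply/funext => q; rewrite /binom_pmf /= !fctE.
by apply: is_derive_eq; rewrite /dbinom_pmf !fctE /= /GRing.scale /=; ring.
Qed.

Lemma sum_dbinom_pmf m j (p : R) : (j <= m)%N ->
  \sum_(i < j.+1) dbinom_pmf m.+1 i p = - (m.+1%:R * binom_pmf m j p).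
Proof.
elim: j => [|j IH] jm; first by rewrite big_ord1 /dbinom_pmf /binom_pmf !bin0 !subn0 /=; ring.
rewrite big_ord_recr /= IH; last lia.
have diag : j.+1%:R * 'C(m.+1, j.+1)%:R = m.+1%:R * 'C(m, j)%:R :> R.
  by rewrite -!natrM -mul_bin_diag.
have down : (m - j)%:R * 'C(m.+1, j.+1)%:R = m.+1%:R * 'C(m, j.+1)%:R :> R.
  by rewrite -!natrM -subSS mul_bin_down.
rewrite /dbinom_pmf /binom_pmf subSS /= -subnS.
transitivity (- (m.+1%:R * ('C(m, j)%:R * p ^+ j * (1 - p) ^+ (m - j))) +
   ((j.+1%:R * 'C(m.+1, j.+1)%:R) * p ^+ j * (1 - p) ^+ (m - j) -
    ((m - j)%:R * 'C(m.+1, j.+1)%:R) * p ^+ j.+1 * (1 - p) ^+ (m - j.+1))); first ring.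
by rewrite diag down; ring.
Qed.

Lemma is_derive_binom_cdf m j (p : R) : (j <= m)%N ->
  is_derive p 1 (binom_cdf m.+1 j) (- (m.+1%:R * binom_pmf m j p)).
Proof.
move=> jm; rewrite -sum_dbinom_pmf //.
have -> : binom_cdf m.+1 j = (fun q => \sum_(i < j.+1) binom_pmf m.+1 i q) by [].
by rewrite -fct_sumE; apply: is_derive_sum => i; exact: is_derive_binom_pmf.
Qed.

Lemma noise_p0 : noise_p (0 : R) = 0.
Proof. by rewrite /noise_p oppr0 expR0 subrr mul0r. Qed.

Lemma noise_p_ge0 (t : R) : 0 <= t -> 0 <= noise_p t.
Proof.
move=> t0; rewrite /noise_p divr_ge0 // subr_ge0 -expR0 ler_expR; lra.
Qed.

Lemma noise_p_le_half (t : R) : noise_p t <= 1 / 2.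
Proof. by rewrite /noise_p; have := expR_ge0 (- t); lra. Qed.

Lemma noise_p_le1 (t : R) : noise_p t <= 1.
Proof. by have := noise_p_le_half t; lra. Qed.

Lemma is_derive_noise_p (t : R) : is_derive t 1 (@noise_p R) (expR (- t) / 2).
Proof.
have -> : @noise_p R = (fun u => 2^-1 * u) \o (fun u => 1 - u) \o (expR \o -%R).
  by apply/funext => u; rewrite /noise_p /= mulrC.
by apply: is_derive_eq; rewrite /GRing.scale /=; field.
Qed.

Definition noise_weight n k (t : R) : R := binom_pmf n k (noise_p t).

Lemma noise_weight_ge0 n k (t : R) : 0 <= t -> 0 <= noise_weight n k t.
Proof. by move=> t0; rewrite binom_pmf_ge0 ?noise_p_ge0 ?noise_p_le1. Qed.

Lemma noise_weight_le1 n k (t : R) : 0 <= t -> noise_weight n k t <= 1.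
Proof. by move=> t0; rewrite binom_pmf_le1 ?noise_p_ge0 ?noise_p_le1. Qed.

Lemma noise_weight_continuous n k : continuous (noise_weight n k).
Proof.
apply: derivable_continuous => t.
by have [] := is_derive1_comp (is_derive_binom_pmf n k (noise_p t)) (is_derive_noise_p t).
Qed.

Lemma expN_mul_noise_weight_continuous n k :
  continuous (fun t => expR (- t) * noise_weight n k t).
Proof.
move=> x; apply: (@continuousM _ _ (expR \o -%R) (noise_weight n k) x).
  exact: continuous_comp (@opp_continuous _ x) (@continuous_expR R _).
exact: noise_weight_continuous.
Qed.

(* Since [d noise_p / dt = exp(-t) / 2], the chain rule and
   [is_derive_binom_cdf] show that this is a primitive of
   [exp(-t) * noise_weight n j t]. *)
Definition noise_weight_prim n j (t : R) : R :=
  - (2 / n.+1%:R) * binom_cdf n.+1 j (noise_p t).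

Lemma is_derive_noise_weight_prim n j (t : R) : (j <= n)%N ->
  is_derive t 1 (noise_weight_prim n j) (expR (- t) * noise_weight n j t).
Proof.
move=> jn; have -> : noise_weight_prim n j =
    (fun u => - (2 / n.+1%:R) * u) \o (binom_cdf n.+1 j \o @noise_p R).
  by apply/funext.
have dG := is_derive1_comp (is_derive_binom_cdf (noise_p t) jn) (is_derive_noise_p t).
have dlin : is_derive (binom_cdf n.+1 j (noise_p t)) 1
    (fun u : R => - (2 / n.+1%:R) * u) (- (2 / n.+1%:R)).
  have -> : (fun u : R => - (2 / n.+1%:R) * u) = - (2 / n.+1%:R) \*: id by apply/funext.
  by apply: is_derive_eq; rewrite /GRing.scale /= mulr1.
apply: (is_derive_eq (@is_derive1_comp R _ (binom_cdf n.+1 j \o @noise_p R) t _ _ dlin dG)).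
by rewrite /noise_weight; field; rewrite addrC natr1 pnatr_eq0.
Qed.

Lemma continuous_integrable_itv (f : R -> R) (a b : R) : continuous f ->
  (@lebesgue_measure R).-integrable `[a, b] (EFin \o f).
Proof.
move=> cf; apply: continuous_compact_integrable; first exact: segment_compact.
exact: continuous_subspaceT.
Qed.

Lemma Rintegral_expN_noise_weight n j (a b : R) : (j <= n)%N -> a < b ->
  \int[lebesgue_measure]_(t in `[a, b]) (expR (- t) * noise_weight n j t) =
  noise_weight_prim n j b - noise_weight_prim n j a.
Proof.
move=> jn ab; have dF x := is_derive_noise_weight_prim x jn.
have cF : continuous (noise_weight_prim n j).
  by apply: derivable_continuous => x; have [] := dF x.
have cf : {within `[a, b], continuous (fun t => expR (- t) * noise_weight n j t)}.
  by apply: continuous_subspaceT; exact: expN_mul_noise_weight_continuous.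
have dFab : derivable_oo_LRcontinuous (noise_weight_prim n j) a b.
  split; first by move=> x _; have [] := dF x.
  - exact: cvg_at_right_filter (cF a).
  - exact: cvg_at_left_filter (cF b).
have F'f : {in `]a, b[, derive1 (noise_weight_prim n j) =1
    (fun t => expR (- t) * noise_weight n j t)}.
  by move=> x _; rewrite derive1E; have [] := dF x.
by rewrite /Rintegral (continuous_FTC2 ab cf dFab F'f) -EFinB.
Qed.

End NoiseWeights.

Section NoiseWeightIntegrals.
Variable R : realType.
Implicit Types (a b c d T : R) (n j k : nat).

Lemma le_Rintegral_subitv (f : R -> R) a b c d : continuous f -> c <= a -> b <= d ->
  (forall x, c <= x -> x <= d -> 0 <= f x) ->
  \int[lebesgue_measure]_(t in `[a, b]) f t <= \int[lebesgue_measure]_(t in `[c, d]) f t.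
Proof.
move=> cf ca bd f0; have iab := continuous_integrable_itv a b cf.
have icd := continuous_integrable_itv c d cf.
rewrite /Rintegral; apply: fine_le; [exact: integrable_fin_num iab|exact: integrable_fin_num icd|].
apply: ge0_subset_integral => //.
- by case/integrableP: icd.
- by move=> x /=; rewrite in_itv /= => /andP[cx xd]; rewrite lee_fin f0.
- by move=> x /=; rewrite !in_itv /= => /andP[ax xb]; rewrite (le_trans ca ax) (le_trans xb bd).
Qed.

Lemma continuous_sumr N (F : nat -> R -> R) : (forall k, continuous (F k)) ->
  continuous (fun t => \sum_(k < N) F k t).
Proof.
move=> cF; elim: N => [|N IH].
  by under eq_fun do rewrite big_ord0; exact: cst_continuous.
under eq_fun do rewrite big_ord_recr.
move=> x; apply: (@continuousD _ _ _ (fun t => \sum_(k < N) F k t) (F N) x).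
  exact: IH.
exact: cF.
Qed.

Lemma Rintegral_sumr N (F : nat -> R -> R) a b : (forall k, continuous (F k)) ->
  \int[lebesgue_measure]_(t in `[a, b]) (\sum_(k < N) F k t) =
  \sum_(k < N) \int[lebesgue_measure]_(t in `[a, b]) F k t.
Proof.
move=> cF; elim: N => [|N IH].
  by under eq_Rintegral do rewrite big_ord0; rewrite Rintegral_cst // mul0r big_ord0.
under eq_Rintegral do rewrite big_ord_recr.
rewrite RintegralD ?IH ?big_ord_recr //; apply: continuous_integrable_itv => //.
exact: continuous_sumr.
Qed.

Lemma Rintegral_noise_weight_ge0 n k T :
  0 <= \int[lebesgue_measure]_(t in `[0, T]) noise_weight n k t.
Proof.
by apply: Rintegral_ge0 => t /=; rewrite in_itv /= => /andP[t0 _]; exact: noise_weight_ge0.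
Qed.

Lemma Rintegral_noise_weight_le n k T : 0 < T ->
  \int[lebesgue_measure]_(t in `[0, T]) noise_weight n k t <= T.
Proof.
move=> T0; apply: (@le_trans _ _ (\int[lebesgue_measure]_(t in `[0, T]) cst 1 t)).
  apply: le_Rintegral => //.
  - exact: continuous_integrable_itv (@noise_weight_continuous R n k).
  - exact: continuous_integrable_itv (@cst_continuous _ _ _).
  by move=> t /=; rewrite in_itv /= => /andP[t0 _]; exact: noise_weight_le1.
rewrite Rintegral_cst //= lebesgue_measure_itv /= lte_fin T0 /=.
by rewrite mul1r subr0.
Qed.

(* On [[a, b]] the weight [exp(a - t)] is at most 1, so the integral of
   [noise_weight] dominates [exp a] times the integral computed by
   [Rintegral_expN_noise_weight]. *)
Lemma Rintegral_noise_weight_ge n j a b T : (j <= n)%N -> 0 <= a -> a < b -> b <= T ->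
  2 * expR a / n.+1%:R * (binom_cdf n.+1 j (noise_p a) - binom_cdf n.+1 j (noise_p b)) <=
  \int[lebesgue_measure]_(t in `[0, T]) noise_weight n j t.
Proof.
move=> jn a0 ab bT; apply: le_trans (le_Rintegral_subitv (@noise_weight_continuous R n j)
  a0 bT (fun x x0 _ => noise_weight_ge0 n j x0)).
have -> : 2 * expR a / n.+1%:R *
    (binom_cdf n.+1 j (noise_p a) - binom_cdf n.+1 j (noise_p b)) =
    expR a * \int[lebesgue_measure]_(t in `[a, b]) (expR (- t) * noise_weight n j t).
  by rewrite Rintegral_expN_noise_weight // /noise_weight_prim; field; rewrite addrC natr1 pnatr_eq0.
have cw := @expN_mul_noise_weight_continuous R n j.
rewrite -RintegralZl //; last exact: continuous_integrable_itv.
apply: le_Rintegral => //.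
- apply: continuous_integrable_itv => x.
  by apply: (@continuousM _ _ (cst (expR a)) _ x); [exact: cst_continuous | exact: cw].
- exact: continuous_integrable_itv (@noise_weight_continuous R n j).
move=> x /=; rewrite in_itv /= => /andP[ax xb].
rewrite mulrA -expRD -[leRHS]mul1r ler_wpM2r ?noise_weight_ge0 ?(le_trans a0 ax) //.
by rewrite -expR0 ler_expR; lra.
Qed.

Lemma binom_cdf_le_half_add n j (p : R) : (2 * j <= n)%N -> 0 <= p -> p <= 1 / 2 ->
  binom_cdf n.+1 j p <= 1 / 2 + n.+1%:R * (1 / 2 - p).
Proof.
move=> jn p0 p1; have jn' : (j <= n)%N by lia.
have cG : {within `[p, 1 / 2], continuous (binom_cdf n.+1 j)}.
  apply: continuous_subspaceT; apply: derivable_continuous => y.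
  by have [] := is_derive_binom_cdf y jn'.
have [c /andP[] ] := MVT_segment p1 (fun y _ => is_derive_binom_cdf y jn') cG.
rewrite !bnd_simp => pc c1 MVT.
have c0 : 0 <= c by exact: le_trans pc.
have c1' : c <= 1 by lra.
have -> : binom_cdf n.+1 j p =
    binom_cdf n.+1 j (1 / 2) + n.+1%:R * binom_pmf n j c * (1 / 2 - p).
  by rewrite -[binom_cdf _ _ (1 / 2)](subrK (binom_cdf n.+1 j p)) MVT; ring.
apply: lerD; first by apply: binom_cdf_half; lia.
rewrite -mulrA ler_wpM2l ?ler0n // -[leRHS]mul1r ler_wpM2r ?binom_pmf_le1 //; lra.
Qed.

Lemma binom_cdf_noise_p_le n j : (2 * j <= n)%N ->
  binom_cdf n.+1 j (noise_p (2 * n.+1)%:R) <= 3 / 4 :> R.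
Proof.
move=> jn; set N := (2 * n.+1)%N.
apply: (le_trans (binom_cdf_le_half_add jn (noise_p_ge0 (ler0n _ N)) (noise_p_le_half _))).
have hE : 2 * n.+1%:R <= expR N%:R :> R.
  by apply: (le_trans _ (expR_ge1Dx _)); rewrite /N natrM; lra.
have he : 0 < expR N%:R :> R := expR_gt0 _.
have -> : 1 / 2 - noise_p N%:R = 1 / (2 * expR N%:R) :> R.
  by rewrite /noise_p expRN; field; rewrite gt_eqF.
suff : n.+1%:R / (2 * expR N%:R) <= 1 / 4 :> R by rewrite mul1r; lra.
by rewrite ler_pdivrMr ?mulr_gt0 //; lra.
Qed.

(* Telescoping over the times [i] with [exp(-i)] weights converts the
   integrals into the increments of [binom_cdf n.+1 j (noise_p i)], which
   decreases from [1] at [i = 0] to at most [3/4]. *)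
Lemma sum_expN_Rintegral_noise_weight_ge n j : (2 * j <= n)%N ->
  1 / (2 * n.+1%:R) <= \sum_(i < (2 * n.+1)%N) expR (- (i%:R)) *
      \int[lebesgue_measure]_(t in `[0, i.+1%:R]) noise_weight n j (t : R).
Proof.
move=> jn; have jn' : (j <= n)%N by lia.
set N := (2 * n.+1)%N; have hm : 0 < n.+1%:R :> R by rewrite ltr0n.
pose u i := binom_cdf n.+1 j (noise_p (i%:R : R)).
apply: (@le_trans _ _ (\sum_(i < N) (2 / n.+1%:R) * (u i - u i.+1))).
  rewrite -mulr_sumr -(big_mkord xpredT (fun i => u i - u i.+1)).
  rewrite (telescope_sumr_eq (fun i => - u i)) // => [|i _]; last by rewrite opprK addrC.
  have u0 : u 0%N = 1 by rewrite /u noise_p0 binom_cdf0.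
  have := binom_cdf_noise_p_le jn; rewrite -/N -/(u N) u0 opprK => uN.
  rewrite ler_pdivrMr ?mulr_gt0 //.
  have -> : 2 / n.+1%:R * (- u N + 1) * (2 * n.+1%:R) = 4 * (1 - u N).
    by field; rewrite gt_eqF.
  lra.
apply: ler_sum => i _; have ii1 : i%:R < i.+1%:R :> R by rewrite ltr_nat.
apply: le_trans (ler_wpM2l (expR_ge0 _)
  (Rintegral_noise_weight_ge jn' (ler0n _ i) ii1 (lexx _))).
rewrite [leRHS](_ : _ = expR (- i%:R) * expR i%:R * (2 / n.+1%:R * (u i - u i.+1))).
  by rewrite -expRD addNr expR0 mul1r.
by rewrite /u; ring.
Qed.

Lemma expRN_le_half_sub T : 0 <= T -> T <= 1 -> expR (- T) <= 1 - T / 2.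
Proof.
move=> T0 T1; rewrite expRN -[leLHS]mul1r ler_pdivrMr ?expR_gt0 //.
by have := expR_ge1Dx T; nra.
Qed.

(* Up to time [8 (k+1) / (n+1)] the noise moves [noise_p] enough for the
   binomial mean to exceed [2 k + 2], so [binom_tail_ge] applies. *)
Lemma Rintegral_noise_weight_short_ge n k j : (8 * k.+1 <= n.+1)%N -> (j <= k)%N ->
  1 / (4 * n.+1%:R) <=
  \int[lebesgue_measure]_(t in `[0, 8 * k.+1%:R / n.+1%:R]) noise_weight n j (t : R).
Proof.
move=> kn jk; set m : R := n.+1%:R; set T : R := 8 * k.+1%:R / m.
have m0 : 0 < m by rewrite ltr0n.
have k1 : 1 <= k.+1%:R :> R by rewrite ler1n.
have km : 8 * k.+1%:R <= m by rewrite /m -natrM ler_nat.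
have T0 : 0 < T by rewrite divr_gt0 // mulr_gt0 // ltr0n.
have T1 : T <= 1 by rewrite ler_pdivrMr // mul1r.
apply: le_trans (Rintegral_noise_weight_ge (ltac:(lia) : (j <= n)%N) (lexx 0) T0 (lexx T)).
rewrite expR0 noise_p0 binom_cdf0 mulr1.
have mT : m * T = 8 * k.+1%:R by rewrite mulrC divfK // gt_eqF.
have mp : 2 * k.+1%:R <= m * noise_p T.
  have := expRN_le_half_sub (ltW T0) T1; rewrite /noise_p; nra.
have jk' : j%:R + 1 <= k.+1%:R :> R by rewrite natr1 ler_nat.
have tail := binom_tail_ge (noise_p_ge0 (ltW T0)) (noise_p_le1 T)
  (ltac:(lia) : (j <= n.+1)%N) (ltac:(lra) : 1 <= m * noise_p T)
  (ltac:(lra) : 2 * j%:R <= m * noise_p T).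
have -> : 1 / (4 * m) = 2 / m * (1 / 8) by field; rewrite gt_eqF.
by rewrite ler_wpM2l // divr_ge0 // ltW.
Qed.

End NoiseWeightIntegrals.

Local Close Scope classical_set_scope.

Section Cube.
Variable n : nat.
Implicit Types x y : cube n.

Definition cube_compl x : cube n := [ffun i => ~~ x i].

(* In [hamming] the comprehension [[set i | _]] is a classical set; this
   restates it as a [finset]. *)
Lemma hammingE x y : hamming x y = #|[set i | x i != y i]|.
Proof.
by apply: eq_card => i; rewrite inE /=; apply/idP/idP => [/set_mem | h]; last exact/mem_set.
Qed.

Lemma hamming_le x y : (hamming x y <= n)%N.
Proof. by rewrite hammingE (leq_trans (max_card _)) ?card_ord. Qed.

Lemma hamming0 x y : (hamming x y == 0%N) = (y == x).
Proof.
rewrite hammingE cards_eq0; apply/eqP/eqP => [xy | ->].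
  apply/ffunP => i; apply/eqP; apply: contraT => yxi.
  have : i \in [set i | x i != y i] by rewrite inE eq_sym.
  by rewrite xy inE.
by apply/setP => i; rewrite !inE eqxx.
Qed.

Lemma hamming_compl x y : hamming (cube_compl x) y = (n - hamming x y)%N.
Proof.
rewrite !hammingE (_ : [set i | _] = ~: [set i | x i != y i]).
  by rewrite cardsCs card_ord finset.setCK.
by apply/setP => i; rewrite !inE ffunE; case: (x i); case: (y i).
Qed.

Lemma cube_compl_inj : injective cube_compl.
Proof.
by move=> x y /ffunP xy; apply/ffunP => i; have := xy i; rewrite !ffunE => /negb_inj.
Qed.

End Cube.

Section SphericalMeans.
Variables (R : realType) (n : nat).
Implicit Types (f g : fn R n) (x : cube n).

Definition l1norm f : R := \sum_y `|f y|.

Lemma l1norm_ge0 f : 0 <= l1norm f.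
Proof. exact: sumr_ge0. Qed.

Lemma abs_le_l1norm f x : `|f x| <= l1norm f.
Proof. by rewrite /l1norm (bigD1 x) //= lerDl sumr_ge0. Qed.

Lemma Sph0 f x : Sph 0 f x = f x.
Proof.
by rewrite /Sph bin0 invr1 mul1r (big_pred1 x) // => y /=; rewrite hamming0.
Qed.

Lemma Sph_ge0 k g x : (forall y, 0 <= g y) -> 0 <= Sph k g x.
Proof. by move=> g0; rewrite /Sph mulr_ge0 ?invr_ge0 ?ler0n ?sumr_ge0. Qed.

Lemma le_Sph k f g x : (forall y, f y <= g y) -> Sph k f x <= Sph k g x.
Proof. by move=> fg; rewrite /Sph ler_wpM2l ?invr_ge0 ?ler0n ?ler_sum. Qed.

Lemma Sph_abs_le k f x : `|Sph k f x| <= l1norm f.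
Proof.
rewrite /Sph normrM -[leRHS]mul1r; apply: ler_pM; rewrite ?normr_ge0 //.
  rewrite ger0_norm ?invr_ge0 ?ler0n //.
  have [->|Cpos] := posnP 'C(n, k); first by rewrite invr0 ler01.
  by rewrite invf_le1 ?ltr0n // ler1n.
apply: (le_trans (ler_norm_sum _ _ _)).
by rewrite [leRHS](bigID (fun y => hamming x y == k)) /= lerDl sumr_ge0.
Qed.

Lemma Sph_compl j g x : (j <= n)%N -> Sph j g (cube_compl x) = Sph (n - j) g x.
Proof.
move=> jn; rewrite /Sph bin_sub //; congr (_ * _); apply: eq_bigl => y.
by rewrite hamming_compl; have := hamming_le x y; case: eqP; case: eqP; lia.
Qed.

Lemma SenS0 f x : SenS 0 f x = f x.
Proof. by rewrite /SenS big_ord1 Sph0 invr1 mul1r. Qed.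

Lemma le_SenS k f g x : (forall y, f y <= g y) -> SenS k f x <= SenS k g x.
Proof. by move=> fg; rewrite /SenS ler_wpM2l ?invr_ge0 ?ler0n // ler_sum // => l _; exact: le_Sph. Qed.

End SphericalMeans.

Local Open Scope classical_set_scope.

Section NoisyMeans.
Variables (R : realType) (n : nat).
Implicit Types (f g : fn R n) (x : cube n) (T : R).

Lemma SenNE T g x : 0 < T -> SenN T g x =
  T^-1 * \sum_(k < n.+1) Sph k g x * \int[lebesgue_measure]_(t in `[0, T]) noise_weight n k t.
Proof.
move=> T0; rewrite /SenN gt_eqF //; congr (_ * _).
have -> : (fun t => Noise t g x) = (fun t => \sum_(k < n.+1) noise_weight n k t * Sph k g x) by [].
rewrite (Rintegral_sumr _ (F := fun k t => noise_weight n k t * Sph k g x)).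
  apply: eq_bigr => k _; rewrite RintegralZr //; first exact: mulrC.
  exact: continuous_integrable_itv (@noise_weight_continuous R n k).
move=> k t; apply: (@continuousM _ _ (noise_weight n k) (cst (Sph k g x)) t).
  exact: noise_weight_continuous.
exact: cst_continuous.
Qed.

Lemma SenN_abs_le T f x : 0 <= T -> `|SenN T f x| <= n.+1%:R * l1norm f.
Proof.
move=> T0; have [-> | Tn0] := eqVneq T 0.
  by rewrite /SenN eqxx (le_trans (abs_le_l1norm f x)) // ler_peMl ?l1norm_ge0 ?ler1n.
have {T0 Tn0}T0 : 0 < T by rewrite lt_neqAle eq_sym Tn0.
rewrite SenNE // normrM ger0_norm ?invr_ge0 ?(ltW T0) // ler_pdivrMl //.
apply: (le_trans (ler_norm_sum _ _ _)).
apply: (@le_trans _ _ (\sum_(k < n.+1) l1norm f * T)); last first.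
  by rewrite sumr_const card_ord mulr_natl mulrnAr [T * _]mulrC.
apply: ler_sum => k _; rewrite normrM (ger0_norm (Rintegral_noise_weight_ge0 _ _ _)).
apply: ler_pM; rewrite ?normr_ge0 ?Rintegral_noise_weight_ge0 ?Sph_abs_le //.
exact: Rintegral_noise_weight_le.
Qed.

Lemma has_sup_SenN f x : has_sup [set SenN T f x | T in [set T | 0 <= T]].
Proof.
split; first by exists (SenN 0 f x), 0; rewrite /= ?lexx.
exists (n.+1%:R * l1norm f) => _ [T T0 <-].
exact: le_trans (ler_norm _) (SenN_abs_le f x T0).
Qed.

Lemma SenN_le_MSenN T f x : 0 <= T -> SenN T f x <= MSenN f x.
Proof. by move=> T0; apply: sup_upper_bound; [exact: has_sup_SenN | exists T]. Qed.

Lemma le_MSenN f x : f x <= MSenN f x.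
Proof. by have := SenN_le_MSenN f x (lexx 0); rewrite /SenN eqxx. Qed.

Lemma MSenN_ge0 g x : (forall y, 0 <= g y) -> 0 <= MSenN g x.
Proof. by move=> g0; exact: le_trans (g0 x) (le_MSenN g x). Qed.

Lemma MSenN_abs_le f x : `|MSenN f x| <= n.+1%:R * l1norm f.
Proof.
rewrite ler_norml; apply/andP; split.
  apply: le_trans (le_MSenN f x); rewrite lerNl; apply: le_trans (ler_norm _) _.
  rewrite normrN (le_trans (abs_le_l1norm f x)) // ler_peMl ?l1norm_ge0 ?ler1n //.
apply: ge_sup; first by exists (SenN 0 f x), 0; rewrite /= ?lexx.
by move=> _ [T T0 <-]; exact: le_trans (ler_norm _) (SenN_abs_le f x T0).
Qed.

Lemma SenS_abs_le k f x : `|SenS k f x| <= l1norm f.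
Proof.
rewrite /SenS normrM ger0_norm ?invr_ge0 ?ler0n // ler_pdivrMl ?ltr0n //.
apply: (le_trans (ler_norm_sum _ _ _)).
rewrite mulr_natl -[in leRHS](card_ord k.+1) -sumr_const.
by apply: ler_sum => l _; exact: Sph_abs_le.
Qed.

Lemma MSenS_le f x u : (forall k, (k <= n)%N -> SenS k f x <= u) -> MSenS f x <= u.
Proof.
by move=> fu; apply: ge_sup; [exists (SenS 0 f x), 0%N | move=> _ [k kn <-]; exact: fu].
Qed.

Lemma le_MSenS f x : f x <= MSenS f x.
Proof.
rewrite -{1}(SenS0 f x); apply: sup_upper_bound; last by exists 0%N.
split; first by exists (SenS 0 f x), 0%N.
by exists (l1norm f) => _ [k _ <-]; exact: le_trans (ler_norm _) (SenS_abs_le k f x).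
Qed.

End NoisyMeans.

Section ExponentialSums.
Variable R : realType.

Lemma exp2_le_expR i : 2 ^+ i <= expR (i%:R : R).
Proof.
elim: i => [|i IH]; first by rewrite expr0 expR0.
rewrite exprS -[i.+1]addn1 natrD expRD mulrC ler_pM //.
by have := expR_ge1Dx (1 : R); lra.
Qed.

Lemma sum_succ_div_exp2 N :
  \sum_(i < N) i.+1%:R / 2 ^+ i = 4 - 2 * N.+2%:R / 2 ^+ N :> R.
Proof.
elim: N => [|N IH]; first by rewrite big_ord0 expr0 divr1; lra.
rewrite big_ord_recr /= IH exprS -!natr1.
by field; rewrite expf_neq0 // pnatr_eq0.
Qed.

Lemma sum_succ_mul_expN_le N : \sum_(i < N) i.+1%:R * expR (- (i%:R : R)) <= 4.
Proof.
apply: (@le_trans _ _ (\sum_(i < N) i.+1%:R / 2 ^+ i)).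
  apply: ler_sum => i _; rewrite ler_wpM2l ?ler0n // expRN.
  by rewrite lef_pV2 ?posrE ?expR_gt0 ?exprn_gt0 ?exp2_le_expR.
by rewrite sum_succ_div_exp2 gerBl mulr_ge0 ?invr_ge0 ?exprn_ge0 ?mulr_ge0 ?ler0n.
Qed.

End ExponentialSums.

Section PointwiseDomination.
Variables (R : realType) (n : nat) (g : fn R n).
Hypothesis g_ge0 : forall y, 0 <= g y.
Implicit Types x : cube n.

Lemma SenS_le_MSenN_small k x : (8 * k.+1 <= n.+1)%N -> SenS k g x <= 32 * MSenN g x.
Proof.
move=> kn; set m : R := n.+1%:R; set T : R := 8 * k.+1%:R / m.
have m0 : 0 < m by rewrite ltr0n.
have T0 : 0 < T by rewrite divr_gt0 // mulr_gt0 // ltr0n.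
apply: (@le_trans _ _ (32 * SenN T g x)); last by rewrite ler_wpM2l // SenN_le_MSenN // ltW.
have low : \sum_(j < k.+1) Sph j g x * (1 / (4 * m)) <=
    \sum_(j < n.+1) Sph j g x * \int[lebesgue_measure]_(t in `[0, T]) noise_weight n j t.
  rewrite (big_ord_widen n.+1 (fun j => Sph j g x * (1 / (4 * m)))); last lia.
  rewrite [leRHS](bigID (fun j : 'I_n.+1 => (j < k.+1)%N)) /=; apply: ler_wpDr.
    by apply: sumr_ge0 => j _; rewrite mulr_ge0 ?Sph_ge0 ?Rintegral_noise_weight_ge0.
  apply: ler_sum => j jk; rewrite ler_wpM2l ?Sph_ge0 //.
  by apply: Rintegral_noise_weight_short_ge => //; rewrite -ltnS.
rewrite SenNE // -mulr_suml in low *.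
have -> : SenS k g x = 32 * (T^-1 * ((\sum_(j < k.+1) Sph j g x) * (1 / (4 * m)))).
  by rewrite /SenS /T; field; rewrite ?gt_eqF // addrC natr1 pnatr_eq0.
by rewrite ler_wpM2l // ler_wpM2l // invr_ge0 ltW.
Qed.

(* Averaging [SenN] over the times [i.+1] with weights [(i+1) exp(-i)],
   whose total is at most 4, gives every sphere of radius at most [n/2]
   a weight of order [1/n] by [sum_expN_Rintegral_noise_weight_ge]. *)
Lemma sum_Sph_low_le_MSenN x :
  (n.+1%:R)^-1 * \sum_(j < n.+1 | (2 * j <= n)%N) Sph j g x <= 8 * MSenN g x.
Proof.
set M := MSenN g x; set N := (2 * n.+1)%N.
have m0 : 0 < n.+1%:R :> R by rewrite ltr0n.
set L := \sum_(i < N) i.+1%:R * expR (- (i%:R : R)) * SenN i.+1%:R g x.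
have LM : L <= 4 * M.
  apply: (@le_trans _ _ (\sum_(i < N) i.+1%:R * expR (- (i%:R : R)) * M)).
    apply: ler_sum => i _; rewrite ler_wpM2l ?mulr_ge0 ?ler0n ?expR_ge0 //.
    exact: SenN_le_MSenN.
  by rewrite -mulr_suml ler_wpM2r ?MSenN_ge0 ?sum_succ_mul_expN_le.
have LE : L = \sum_(j < n.+1) Sph j g x * \sum_(i < N)
    expR (- (i%:R : R)) * \int[lebesgue_measure]_(t in `[0, i.+1%:R]) noise_weight n j t.
  rewrite /L; under eq_bigr => i _.
    rewrite SenNE ?ltr0n // mulrA -[i.+1%:R * _ * _]mulrA [expR _ * _^-1]mulrC.
    rewrite mulrA mulfV ?pnatr_eq0 // mul1r.
    rewrite mulr_sumr; over.
  rewrite exchange_big /=; apply: eq_bigr => j _; rewrite mulr_sumr.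
  by apply: eq_bigr => i _; ring.
have lowL : (2 * n.+1%:R)^-1 * \sum_(j < n.+1 | (2 * j <= n)%N) Sph j g x <= L.
  rewrite LE mulr_sumr [leRHS](bigID (fun j : 'I_n.+1 => (2 * j <= n)%N)) /=.
  apply: ler_wpDr.
    apply: sumr_ge0 => j _; rewrite mulr_ge0 ?Sph_ge0 // sumr_ge0 // => i _.
    by rewrite mulr_ge0 ?expR_ge0 ?Rintegral_noise_weight_ge0.
  apply: ler_sum => j jn; rewrite mulrC ler_wpM2l ?Sph_ge0 //.
  by have := sum_expN_Rintegral_noise_weight_ge R jn; rewrite mul1r.
have := le_trans lowL LM; set S := \sum_(j < n.+1 | _) _ => SM.
have -> : (n.+1%:R)^-1 * S = 2 * ((2 * n.+1%:R)^-1 * S) by field; rewrite gt_eqF.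
by apply: le_trans (ler_wpM2l (ler0n R 2) SM) _; rewrite mulrA -natrM.
Qed.

(* The spheres of radius above [n/2] around [x] are those of radius below
   [n/2] around the antipode [cube_compl x]. *)
Lemma sum_Sph_le_low x : \sum_(j < n.+1) Sph j g x <=
  \sum_(j < n.+1 | (2 * j <= n)%N) Sph j g x +
  \sum_(j < n.+1 | (2 * j <= n)%N) Sph j g (cube_compl x).
Proof.
rewrite (bigID (fun j : 'I_n.+1 => (2 * j <= n)%N)) /= lerD2l.
rewrite (reindex_inj rev_ord_inj) /= big_mkcond [leRHS]big_mkcond /=.
apply: ler_sum => j _; have jn : (j <= n)%N by rewrite -ltnS.
case: ifP => [jlow | _]; last by case: ifP => _ //; exact: Sph_ge0.
by rewrite ifT ?Sph_compl //; lia.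
Qed.

Lemma SenS_le_MSenN_large k x : (k <= n)%N -> (n.+1 < 8 * k.+1)%N ->
  SenS k g x <= 64 * (MSenN g x + MSenN g (cube_compl x)).
Proof.
move=> kn nk; have m0 : 0 < n.+1%:R :> R by rewrite ltr0n.
have k0 : 0 < k.+1%:R :> R by rewrite ltr0n.
have all0 : 0 <= \sum_(j < n.+1) Sph j g x by apply: sumr_ge0 => j _; exact: Sph_ge0.
have low := sum_Sph_low_le_MSenN x.
have lowc := sum_Sph_low_le_MSenN (cube_compl x).
apply: (@le_trans _ _ ((k.+1%:R)^-1 * \sum_(j < n.+1) Sph j g x)).
  rewrite /SenS ler_wpM2l ?invr_ge0 ?(ltW k0) // (big_ord_widen n.+1 (fun j => Sph j g x)) //.
  rewrite [leRHS](bigID (fun j : 'I_n.+1 => (j < k.+1)%N)) /= lerDl.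
  by apply: sumr_ge0 => j _; exact: Sph_ge0.
apply: (@le_trans _ _ (8 / n.+1%:R * \sum_(j < n.+1) Sph j g x)).
  rewrite ler_wpM2r // ler_pdivlMr // mulrC ler_pdivrMr //.
  by rewrite -natrM ler_nat ltnW.
apply: le_trans (ler_wpM2l _ (sum_Sph_le_low x)) _; first by rewrite divr_ge0 ?(ltW m0).
set A := \sum_(j < n.+1 | _) Sph j g x in low *.
set B := \sum_(j < n.+1 | _) Sph j g (cube_compl x) in lowc *.
have -> : 8 / n.+1%:R * (A + B) = 8 * ((n.+1%:R)^-1 * A + (n.+1%:R)^-1 * B) by ring.
have -> : 64 * (MSenN g x + MSenN g (cube_compl x)) =
    8 * (8 * MSenN g x + 8 * MSenN g (cube_compl x)) by ring.
by rewrite ler_wpM2l //; exact: lerD.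
Qed.

Lemma SenS_le_MSenN_compl k x : (k <= n)%N ->
  SenS k g x <= 64 * (MSenN g x + MSenN g (cube_compl x)).
Proof.
move=> kn; have [nk | nk] := leqP (8 * k.+1) n.+1; last exact: SenS_le_MSenN_large.
apply: le_trans (SenS_le_MSenN_small x nk) _.
by have := MSenN_ge0 x g_ge0; have := MSenN_ge0 (cube_compl x) g_ge0; lra.
Qed.

End PointwiseDomination.

Section L2Estimates.
Variables (R : realType) (n : nat).
Implicit Types (f h u A : fn R n) (x : cube n).

Lemma l2norm_abs f : l2norm (fun y => `|f y|) = l2norm f.
Proof. by congr Num.sqrt; apply: eq_bigr => y _; rewrite real_normK ?num_real. Qed.

Lemma l2norm_gt0 f x : f x != 0 -> 0 < l2norm f.
Proof.
move=> fx; rewrite sqrtr_gt0 (bigD1 x) //= ltr_pwDl ?sumr_ge0 // => [|y _].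
  by rewrite exprn_even_gt0.
exact: sqr_ge0.
Qed.

Lemma abs_le_l2norm f x : `|f x| <= l2norm f.
Proof.
rewrite -sqrtr_sqr ler_sqrt ?sumr_ge0 // => [|y _]; last exact: sqr_ge0.
by rewrite (bigD1 x) //= lerDl sumr_ge0 // => y _; exact: sqr_ge0.
Qed.

Lemma l1norm_le_l2norm f : l1norm f <= #|{: cube n}|%:R * l2norm f.
Proof. by rewrite mulr_natl -sumr_const; apply: ler_sum => y _; exact: abs_le_l2norm. Qed.

Lemma l2norm_le_card h c : (forall x, `|h x| <= c) -> l2norm h <= #|{: cube n}|%:R * c.
Proof.
move=> hc; have c0 : 0 <= c := le_trans (normr_ge0 _) (hc [ffun => false]).
have card1 : (1 <= #|{: cube n}|)%N by apply/card_gt0P; exists [ffun => false].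
rewrite -[leRHS]ger0_norm ?mulr_ge0 ?ler0n // -sqrtr_sqr ler_sqrt ?sqr_ge0 //.
apply: (@le_trans _ _ (\sum_(x : cube n) c ^+ 2)).
  by apply: ler_sum => x _; rewrite -real_normK ?num_real // lerXn2r ?nnegrE.
rewrite sumr_const -(mulr_natl (c ^+ 2)) exprMn ler_wpM2r ?sqr_ge0 //.
by rewrite expr2 -natrM ler_nat leq_pmull.
Qed.

(* Since [cube_compl] permutes the cube, [A \o cube_compl] has the same
   norm as [A]; the pointwise bound then costs a factor 2 through
   [(a + b)^2 <= 2 (a^2 + b^2)]. *)
Lemma l2norm_le_compl u A K : 0 <= K -> (forall x, 0 <= A x) ->
  (forall x, `|u x| <= K * (A x + A (cube_compl x))) -> l2norm u <= 2 * K * l2norm A.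
Proof.
move=> K0 A0 uA.
have sq x : u x ^+ 2 <= 2 * K ^+ 2 * (A x ^+ 2 + A (cube_compl x) ^+ 2).
  have := A0 x; have := A0 (cube_compl x).
  set a := A x; set b := A (cube_compl x) => b0 a0.
  apply: (@le_trans _ _ ((K * (a + b)) ^+ 2)).
    by rewrite -real_normK ?num_real // lerXn2r ?nnegrE ?mulr_ge0 ?addr_ge0 ?uA.
  by have := sqr_ge0 (K * (a - b)); nra.
rewrite -[leRHS]ger0_norm ?mulr_ge0 ?sqrtr_ge0 // -sqrtr_sqr ler_sqrt ?sqr_ge0 //.
rewrite exprMn sqr_sqrtr ?sumr_ge0 // => [|x _]; last exact: sqr_ge0.
apply: le_trans (ler_sum _ (fun x _ => sq x)) _.
rewrite -mulr_sumr big_split /= (reindex_inj (@cube_compl_inj n)) /=.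
by rewrite le_eqVlt; apply/orP; left; apply/eqP; ring.
Qed.

Lemma l2norm_MSenN_le f x : f x != 0 ->
  l2norm (MSenN f) <= opnorm (@MSenN R n) * l2norm f.
Proof.
move=> fx; have f0 := l2norm_gt0 fx; rewrite -ler_pdivrMr //.
apply: sup_upper_bound; last by exists f => //; exists x.
split; first by exists (l2norm (MSenN f) / l2norm f), f => //; exists x.
exists (#|{: cube n}|%:R * (n.+1%:R * #|{: cube n}|%:R)) => _ [h [y hy] <-].
rewrite ler_pdivrMr ?(l2norm_gt0 hy) //.
apply: le_trans (l2norm_le_card (MSenN_abs_le h)) _.
rewrite -!mulrA !ler_wpM2l ?ler0n //; exact: l1norm_le_l2norm.
Qed.

Lemma MSenS_abs_le f x : `|MSenS f x| <=
  64 * (MSenN (fun y => `|f y|) x + MSenN (fun y => `|f y|) (cube_compl x)).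
Proof.
set g := fun y => `|f y|; have g0 y : 0 <= g y := normr_ge0 (f y).
rewrite ler_norml; apply/andP; split.
  apply: le_trans (le_MSenS f x); rewrite lerNl.
  have : g x <= MSenN g x := le_MSenN g x; rewrite {1}/g.
  have := MSenN_ge0 (cube_compl x) g0.
  by have := ler_norm (- f x); have := normr_ge0 (f x); rewrite normrN; lra.
apply: MSenS_le => k kn; apply: le_trans (SenS_le_MSenN_compl g0 x kn).
by apply: le_SenS => y; exact: ler_norm.
Qed.

End L2Estimates.

Unset Implicit Arguments.
Theorem proposition2 (R : realType) :
  exists C : R, forall n : nat, (1 <= n)%N ->
    opnorm (@MSenS R n) <= C * opnorm (@MSenN R n).
Proof.
exists 128 => n _; apply: ge_sup.
  exists (l2norm (@MSenS R n (fun _ => 1)) / l2norm (fun _ : cube n => (1 : R))).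
  by exists (fun _ => 1) => //; exists [ffun => false]; exact: oner_neq0.
move=> _ [f [x fx] <-]; rewrite ler_pdivrMr ?(l2norm_gt0 fx) //.
set g := fun y => `|f y|.
have g0 y : 0 <= MSenN g y by apply: MSenN_ge0 => z; exact: normr_ge0.
apply: le_trans (l2norm_le_compl (ler0n R 64) g0 (MSenS_abs_le f)) _.
rewrite -natrM -mulrA ler_wpM2l // -(l2norm_abs f).
by apply: l2norm_MSenN_le (x) _; rewrite normr_eq0.
Qed.
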